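(* Let $P$ be a $d$-dimensional $(m+1)$-level polytope. Then the monotone diameter of $P$ is at most $(d-1)m+1$.
   Context: A polytope $P=\{\mathbf{x}: A\mathbf{x}\le \mathbf{b}\}$, with $A\mathbf{x}\le\mathbf{b}$ an irredundant description and vertex set $V(P)$, is $(m+1)$-level if for every row $\mathbf{a}^i$ of $A$, $|\{(\mathbf{a}^i)^{\intercal}\mathbf{v} : \mathbf{v}\in V(P)\}|\le m+1$. A $\mathbf{c}$-monotone path is a sequence of vertices of $P$ in which consecutive vertices are joined by an edge of $P$ and $\mathbf{c}^{\intercal}\mathbf{x}$ strictly increases; its length is its number of edges. The monotone diameter of $P$ is the maximum, over all generic linear objectives $\mathbf{c}$ (not constant on any edge) and all vertices $\mathbf{v}$, of the length of a shortest $\mathbf{c}$-monotone path from $\mathbf{v}$ to the $\mathbf{c}$-maximal vertex. *)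

From HB Require Import structures.
From mathcomp Require Import all_boot all_order all_algebra.
Set Implicit Arguments. Unset Strict Implicit. Unset Printing Implicit Defensive.
Import Order.TTheory GRing.Theory Num.Theory.
Local Open Scope ring_scope.

Section Polytopes.
Variable R : realFieldType.
Variable n : nat.

Definition dotv (c x : 'cV[R]_n) : R := \sum_(j < n) c j 0 * x j 0.

Definition polyh (k : nat) (A : 'M[R]_(k, n)) (b : 'cV[R]_k) (x : 'cV[R]_n) : Prop :=
  forall i : 'I_k, (A *m x) i 0 <= b i 0.

Definition irredundant (k : nat) (A : 'M[R]_(k, n)) (b : 'cV[R]_k) : Prop :=
  forall i : 'I_k, exists x : 'cV[R]_n,
    (forall j : 'I_k, j != i -> (A *m x) j 0 <= b j 0) /\ ~ ((A *m x) i 0 <= b i 0).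

Definition bounded (P : 'cV[R]_n -> Prop) : Prop :=
  exists M : R, forall x, P x -> forall j : 'I_n, `|x j 0| <= M.

Definition aff_indep (k : nat) (p : 'I_k.+1 -> 'cV[R]_n) : bool :=
  row_free (\matrix_(i < k, j < n) (p (lift ord0 i) j 0 - p ord0 j 0)).

Definition has_dim (P : 'cV[R]_n -> Prop) (d : nat) : Prop :=
  (exists p : 'I_d.+1 -> 'cV[R]_n, (forall i, P (p i)) /\ aff_indep p) /\
  ~ (exists p : 'I_d.+2 -> 'cV[R]_n, (forall i, P (p i)) /\ aff_indep p).

Definition is_vertex (P : 'cV[R]_n -> Prop) (v : 'cV[R]_n) : Prop :=
  P v /\ exists c : 'cV[R]_n, forall x, P x -> x != v -> dotv c x < dotv c v.

Definition in_segment (u v x : 'cV[R]_n) : Prop :=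
  exists t : R, 0 <= t /\ t <= 1 /\ x = (1 - t) *: u + t *: v.

Definition is_edge (P : 'cV[R]_n -> Prop) (u v : 'cV[R]_n) : Prop :=
  is_vertex P u /\ is_vertex P v /\ u != v /\
  exists c : 'cV[R]_n, dotv c u = dotv c v /\
    (forall x, P x -> dotv c x <= dotv c u) /\
    (forall x, P x -> dotv c x = dotv c u -> in_segment u v x).

Definition is_level (k : nat) (A : 'M[R]_(k, n)) (b : 'cV[R]_k) (m : nat) : Prop :=
  forall i : 'I_k, exists s : seq R, (size s <= m.+1)%N /\
    forall v, is_vertex (polyh A b) v -> dotv (row i A)^T v \in s.

Definition generic (P : 'cV[R]_n -> Prop) (c : 'cV[R]_n) : Prop :=
  forall u v, is_edge P u v -> dotv c u != dotv c v.

(* v :: s is a c-monotone path (sequence of vertices, consecutive ones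
   joined by an edge, c strictly increasing); its length is size s *)
Fixpoint mono_path (P : 'cV[R]_n -> Prop) (c : 'cV[R]_n) (v : 'cV[R]_n)
    (s : seq 'cV[R]_n) : Prop :=
  match s with
  | [::] => is_vertex P v
  | w :: s' => is_edge P v w /\ dotv c v < dotv c w /\ mono_path P c w s'
  end.

Definition monotone_diam_le (P : 'cV[R]_n -> Prop) (D : nat) : Prop :=
  forall c : 'cV[R]_n, generic P c ->
  forall v vmax : 'cV[R]_n, is_vertex P v -> is_vertex P vmax ->
    (forall x, P x -> dotv c x <= dotv c vmax) ->
    exists s : seq 'cV[R]_n,
      mono_path P c v s /\ last v s = vmax /\ (size s <= D)%N.

End Polytopes.

From Pilot Require Import Defs.
From mathcomp Require Import all_boot all_order all_algebra.
From Stdlib Require Import Classical.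
From mathcomp Require Import lra zify.
Set Implicit Arguments. Unset Strict Implicit. Unset Printing Implicit Defensive.
Import Order.TTheory GRing.Theory Num.Theory.
Local Open Scope ring_scope.

(* Induction on the dimension of the faces F_S = {x in P | a_i x = b_i for i in S}.
   If a vertex v of F_S is not c-maximal on F_S, some facet a_i x <= b_i of P is
   tight at v but not on all of F_S, and by induction a c-monotone path leads from v
   to the c-maximum u of the smaller face F_S /\ {a_i x = b_i}.  From u the
   shadow-vertex rule for the objectives a_i + beta c, with beta growing from 0,
   climbs to the c-maximum of F_S: every pivot strictly decreases a_i, which takes at
   most m + 1 values on vertices and starts at its largest one, so there are at most
   m pivots.  Faces of dimension 0 and 1 need at most one edge.  Pivots exist because
   a vertex that is not optimal on a face has an improving edge inside that face,
   found along an extreme ray of the tangent cone; genericity of c makes the vertex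
   reached the c-maximal vertex of P. *)

Section DotProduct.
Variables (R : realFieldType) (n : nat).
Implicit Types (c x y : 'cV[R]_n).

Lemma dotvDr c x y : dotv c (x + y) = dotv c x + dotv c y.
Proof. by rewrite /dotv -big_split; apply: eq_bigr => j _; rewrite mxE mulrDr. Qed.

Lemma dotvZr c t x : dotv c (t *: x) = t * dotv c x.
Proof. by rewrite /dotv mulr_sumr; apply: eq_bigr => j _; rewrite mxE mulrCA. Qed.

Lemma dotvNr c x : dotv c (- x) = - dotv c x.
Proof. by rewrite -scaleN1r dotvZr mulN1r. Qed.

Lemma dotvBr c x y : dotv c (x - y) = dotv c x - dotv c y.
Proof. by rewrite dotvDr dotvNr. Qed.

Lemma dotv0r c : dotv c 0 = 0.
Proof. by rewrite -(scale0r 0) dotvZr mul0r. Qed.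

Lemma dotvDl c c' x : dotv (c + c') x = dotv c x + dotv c' x.
Proof. by rewrite /dotv -big_split; apply: eq_bigr => j _; rewrite mxE mulrDl. Qed.

Lemma dotvZl c t x : dotv (t *: c) x = t * dotv c x.
Proof. by rewrite /dotv mulr_sumr; apply: eq_bigr => j _; rewrite mxE mulrA. Qed.

Lemma dotv_suml (I : finType) (Q : pred I) (F : I -> 'cV[R]_n) x :
  dotv (\sum_(i | Q i) F i) x = \sum_(i | Q i) dotv (F i) x.
Proof.
rewrite /dotv exchange_big; apply: eq_bigr => j _.
by rewrite summxE mulr_suml.
Qed.

Lemma dotv_sumr (I : finType) (F : I -> 'cV[R]_n) c :
  dotv c (\sum_i F i) = \sum_i dotv c (F i).
Proof.
rewrite /dotv exchange_big; apply: eq_bigr => j _.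
by rewrite summxE mulr_sumr.
Qed.

End DotProduct.

Lemma fin_cover_of_inj (T : eqType) (F : finType) (Q : T -> Prop) (g : T -> F) :
  (forall x y, Q x -> Q y -> g x = g y -> x = y) ->
  exists s : seq T, forall x, Q x -> x \in s.
Proof.
move=> g_inj.
suff [s covers] : exists s : seq T, forall x, Q x -> g x \in enum F -> x \in s.
  by exists s => x Qx; rewrite covers ?mem_enum.
elim: (enum F) => [|y ys [s covers]]; first by exists [::].
have [[x0 [Qx0 gx0]] | no_x0] := classic (exists x0, Q x0 /\ g x0 = y).
  exists (x0 :: s) => x Qx; rewrite !inE => /orP[/eqP gx | /(covers _ Qx) ->].
    by rewrite (g_inj _ _ Qx Qx0) ?eqxx // gx gx0.
  exact: orbT.
exists s => x Qx; rewrite inE => /orP[/eqP gx | ]; last exact: covers.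
by case: no_x0; exists x.
Qed.

Section OrderedMinimum.
Variables (disp : Order.disp_t) (O : orderType disp).
Local Open Scope order_scope.

Lemma exists_min_in_seq (T : eqType) (Q : T -> Prop) (f : T -> O) (s : seq T) :
  (exists2 x, Q x & x \in s) ->
  exists x0, [/\ Q x0, x0 \in s & forall x, Q x -> x \in s -> f x0 <= f x].
Proof.
elim: s => [[x _] // | y s IH] exQ.
have [[x1 Qx1 x1s] | Ns] := classic (exists2 x, Q x & x \in s); last first.
  have only_y x : Q x -> x \in y :: s -> x = y.
    by move=> Qx; rewrite inE => /orP[/eqP // | xs]; case: Ns; exists x.
  case: exQ => x Qx /(only_y _ Qx) xy; rewrite xy in Qx.
  by exists y; split; rewrite ?mem_head // => x' Qx' /(only_y _ Qx') ->.
have [x0 [Qx0 x0s min_x0]] := IH (ex_intro2 _ _ x1 Qx1 x1s).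
have [[Qy le_y] | not_y] := classic (Q y /\ f y <= f x0).
  exists y; split; rewrite ?mem_head // => x Qx; rewrite inE => /orP[/eqP -> // | xs].
  exact: le_trans le_y (min_x0 _ Qx xs).
exists x0; split; rewrite ?inE ?x0s ?orbT // => x Qx.
rewrite inE => /orP[/eqP xy | ]; last exact: min_x0.
rewrite leNgt; apply/negP => lt_x; apply: not_y; rewrite -xy.
by split; last exact: ltW.
Qed.

Lemma exists_min_of_inj (T : eqType) (F : finType) (Q : T -> Prop) (g : T -> F) (f : T -> O) :
  (forall x y, Q x -> Q y -> g x = g y -> x = y) -> (exists x, Q x) ->
  exists2 x0, Q x0 & forall x, Q x -> f x0 <= f x.
Proof.
move=> /fin_cover_of_inj[s covers] [x Qx].
have [x0 [Qx0 _ min_x0]] := exists_min_in_seq f (ex_intro2 _ _ x Qx (covers _ Qx)).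
by exists x0 => // y Qy; apply: min_x0 => //; apply: covers.
Qed.

Lemma count_lt_mem (s : seq O) (x y : O) :
  x < y -> x \in s -> (count (< x) s < count (< y) s)%N.
Proof.
move=> lt_xy; rewrite -count_lt_le_mem => /leq_trans; apply.
by apply: sub_count => z /= le_zx; apply: le_lt_trans lt_xy.
Qed.

Lemma count_lt_size (s : seq O) (x : O) : x \in s -> (count (< x) s < size s)%N.
Proof. by rewrite -count_lt_le_mem => /leq_trans; apply; apply: count_size. Qed.

End OrderedMinimum.

Section AffineIndependence.
Variables (R : realFieldType) (n : nat).
Implicit Types (v w x : 'cV[R]_n).

Lemma aff_indepP j (p : 'I_j.+1 -> 'cV[R]_n) :
  aff_indep p <->
  (forall u : 'I_j -> R, \sum_i u i *: (p (lift ord0 i) - p ord0) = 0 -> forall i, u i = 0).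
Proof.
rewrite /aff_indep; set M := (X in row_free X).
have mulM (u : 'rV[R]_j) :
    u *m M = (\sum_i u 0 i *: (p (lift ord0 i) - p ord0))^T.
  apply/matrixP => i l; rewrite (ord1 i) !mxE summxE.
  by apply: eq_bigr => k _; rewrite !mxE.
split=> [free u sum0 i | inj].
  have row_u0 : \row_i u i = 0.
    apply: (row_free_inj free); rewrite mul0mx mulM /=.
    by under eq_bigr do rewrite mxE; rewrite sum0 trmx0.
  by move/rowP/(_ i): row_u0; rewrite !mxE.
apply: inj_row_free => u uM0; apply/rowP => i; rewrite mxE.
by apply: inj; apply: trmx_inj; rewrite -mulM uM0 trmx0.
Qed.

Lemma aff_indep2 v x : x != v -> aff_indep (fun l : 'I_2 => [:: v; x]`_l).
Proof.
move=> xv; apply/aff_indepP => u; rewrite big_ord1 /= => /eqP.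
by rewrite scaler_eq0 subr_eq0 (negbTE xv) orbF => /eqP u0 i; rewrite (ord1 i).
Qed.

Lemma aff_indep3 v w x : w != v -> ~ (exists s, x - v = s *: (w - v)) ->
  aff_indep (fun l : 'I_3 => [:: v; w; x]`_l).
Proof.
move=> wv not_collinear; apply/aff_indepP => u.
rewrite !big_ord_recl big_ord0 addr0 /= => sum0.
have u1_0 : u (lift ord0 ord0) = 0.
  apply: NNPP => /eqP u1; apply: not_collinear.
  exists (- (u ord0 / u (lift ord0 ord0))); apply: (scalerI u1).
  rewrite scalerA mulrN mulrCA mulfV // mulr1 scaleNr.
  by apply/eqP; rewrite -addr_eq0 addrC sum0.
move: sum0 => /eqP; rewrite u1_0 scale0r addr0 scaler_eq0 subr_eq0 (negbTE wv) orbF.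
by move=> /eqP u0 i; case: (unliftP ord0 i) => [i'|] ->; rewrite // (ord1 i').
Qed.

(* [p 0; x; p 1; ...; p j]: the base point [p 0] of [aff_indep] is kept. *)
Definition insert1 j (p : 'I_j.+1 -> 'cV[R]_n) x (l : 'I_j.+2) : 'cV[R]_n :=
  if unlift (lift ord0 ord0) l is Some l' then p l' else x.

Lemma aff_indep_insert1 j (p : 'I_j.+2 -> 'cV[R]_n) x (a : 'cV[R]_n) :
  aff_indep p -> (forall l, dotv a (p l) = dotv a (p ord0)) ->
  dotv a x != dotv a (p ord0) -> aff_indep (insert1 p x).
Proof.
move=> /aff_indepP p_free a_const a_x; apply/aff_indepP => u.
have q_lift l : insert1 p x (lift (lift ord0 ord0) l) = p l by rewrite /insert1 liftK.
have q0 : insert1 p x ord0 = p ord0.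
  by rewrite -(q_lift ord0); congr insert1; apply: val_inj.
have q1 : insert1 p x (lift ord0 ord0) = x by rewrite /insert1 unlift_none.
have q2 i : insert1 p x (lift ord0 (lift ord0 i)) = p (lift ord0 i).
  by rewrite -q_lift; congr insert1; apply: val_inj.
rewrite big_ord_recl q0 q1; under eq_bigr do rewrite q2; move=> sum0.
have u0 : u ord0 = 0.
  move: (congr1 (dotv a) sum0); rewrite dotvDr dotv_sumr big1 => [|i _]; last first.
    by rewrite dotvZr dotvBr a_const subrr mulr0.
  rewrite dotvZr dotvBr dotv0r addr0 => /eqP; rewrite mulf_eq0 subr_eq0 (negbTE a_x).
  by rewrite orbF => /eqP.
move: sum0; rewrite u0 scale0r add0r => /p_free u_lift i.
by case: (unliftP ord0 i) => [i'|] ->.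
Qed.

End AffineIndependence.

Section PointSets.
Variables (R : realFieldType) (n : nat) (Q : 'cV[R]_n -> Prop).

Lemma vertex_line_le1 v w s : is_vertex Q w -> Q v -> Q (v + s *: (w - v)) -> w != v ->
  s <= 1.
Proof.
move=> [_ [g max_g]] Qv Qs wv.
have gv : dotv g v < dotv g w by apply: max_g; rewrite // eq_sym.
have gs : dotv g (v + s *: (w - v)) <= dotv g w.
  by have [-> // | ne] := eqVneq (v + s *: (w - v)) w; apply/ltW/max_g.
move: gs; rewrite dotvDr dotvZr dotvBr => gs.
rewrite leNgt; apply/negP => s1.
have : 0 < (s - 1) * (dotv g w - dotv g v) by rewrite mulr_gt0 // subr_gt0.
lra.
Qed.

(* [Defs.] disambiguates from the lemma [mono_path] of path.v. *)
Lemma mono_path_last c v p : Defs.mono_path Q c v p -> is_vertex Q (last v p).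
Proof. by elim: p v => [|w p IH] v //= [_ [_ /IH]]. Qed.

Lemma mono_path_cat c v p q :
  Defs.mono_path Q c v p -> Defs.mono_path Q c (last v p) q -> Defs.mono_path Q c v (p ++ q).
Proof.
elim: p v => [|w p IH] v //= [edge [up path_p]] path_q.
by do 2!split=> //; apply: IH.
Qed.

End PointSets.

Lemma ratio_test (R : realFieldType) (n : nat) (I : finType) (J : pred I)
    (a : I -> 'cV[R]_n) (beta : I -> R) (y z : 'cV[R]_n) i0 :
  (forall i, J i -> dotv (a i) y <= beta i) -> J i0 -> 0 < dotv (a i0) z ->
  exists t i1, [/\ J i1, 0 < dotv (a i1) z, dotv (a i1) y + t * dotv (a i1) z = beta i1
    & forall i, J i -> dotv (a i) (y + t *: z) <= beta i].
Proof.
move=> feas Ji0 pos0; pose ratio i := (beta i - dotv (a i) y) / dotv (a i) z.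
have [i1 /andP[Ji1 pos1] min1] :=
  arg_minP ratio (P := fun i => J i && (0 < dotv (a i) z)) (introT andP (conj Ji0 pos0)).
set t := ratio _ in min1 *; have t_def : t * dotv (a i1) z = beta i1 - dotv (a i1) y.
  by rewrite /t /ratio divfK ?gt_eqF.
exists t, i1; split=> //; first by rewrite t_def addrC subrK.
move=> i Ji; rewrite dotvDr dotvZr.
have [pos | nonpos] := ltP 0 (dotv (a i) z).
  by move: (min1 i (introT andP (conj Ji pos))); rewrite ler_pdivlMr // => ?; lra.
have t_ge0 : 0 <= t by rewrite divr_ge0 ?subr_ge0 ?feas ?ltW.
by have := feas i Ji; have := mulr_ge0_le0 t_ge0 nonpos; lra.
Qed.

Section Polyhedron.
Variables (R : realFieldType) (n k : nat) (A : 'M[R]_(k, n)) (b : 'cV[R]_k).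
Implicit Types (c r x y z w : 'cV[R]_n) (S : {set 'I_k}).
Local Notation P := (polyh A b).

Definition arow i : 'cV[R]_n := (row i A)^T.
Definition brow i : R := b i 0.

Lemma polyhP x : P x <-> forall i, dotv (arow i) x <= brow i.
Proof.
have rowE i : (A *m x) i 0 = dotv (arow i) x.
  by rewrite mxE; apply: eq_bigr => j _; rewrite !mxE.
by split=> Px i; move: (Px i); rewrite rowE.
Qed.

Definition active x i : bool := dotv (arow i) x == brow i.

Definition face S x : Prop := P x /\ forall i, i \in S -> dotv (arow i) x = brow i.

Lemma face0 x : face set0 x <-> P x.
Proof. by split=> [[] // | Px]; split=> // i; rewrite inE. Qed.

Lemma face_sum_le S x : P x -> dotv (\sum_(i in S) arow i) x <= \sum_(i in S) brow i.
Proof. by move/polyhP=> Px; rewrite dotv_suml; apply: ler_sum => i _. Qed.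

Lemma face_sumE S x : P x ->
  dotv (\sum_(i in S) arow i) x = \sum_(i in S) brow i <-> face S x.
Proof.
move=> Px; split=> [sum_eq | [_ Sx]]; last by rewrite dotv_suml; apply: eq_bigr.
have ge0 i : i \in S -> 0 <= brow i - dotv (arow i) x.
  by move=> _; rewrite subr_ge0; move/polyhP: Px.
have sum0 : \sum_(i in S) (brow i - dotv (arow i) x) = 0.
  by rewrite sumrB -dotv_suml sum_eq subrr.
split=> // i /(psumr_eq0P ge0 sum0)/eqP.
by rewrite subr_eq0 => /eqP.
Qed.

Definition tangent w y : Prop := forall i, active w i -> dotv (arow i) y <= 0.

Lemma exit_point w z i0 : P w -> tangent w z -> 0 < dotv (arow i0) z ->
  exists t i1, [/\ 0 < t, P (w + t *: z), 0 < dotv (arow i1) z & active (w + t *: z) i1].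
Proof.
move=> /polyhP Pw cone pos0.
have [t [i1 [_ pos1 tight1 feas]]] := ratio_test (J := predT) (fun i _ => Pw i) isT pos0.
exists t, i1; split=> //; last by rewrite /active dotvDr dotvZr tight1.
  have slack1 : dotv (arow i1) w < brow i1.
    by rewrite lt_neqAle Pw andbT; apply: contraTN pos1 => /cone; rewrite leNgt.
  have : 0 < t * dotv (arow i1) z by lra.
  by rewrite pmulr_lgt0.
by apply/polyhP => i; apply: feas.
Qed.

Lemma feasible_direction w z : P w -> tangent w z -> exists2 t, 0 < t & P (w + t *: z).
Proof.
move=> Pw cone.
have [[i0 pos0] | none] := classic (exists i, 0 < dotv (arow i) z).
  by have [t [i1 [t0 Pt _ _]]] := exit_point Pw cone pos0; exists t.
exists 1 => //; apply/polyhP => i; rewrite scale1r dotvDr.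
have : dotv (arow i) z <= 0 by rewrite leNgt; apply/negP => pos; apply: none; exists i.
by move/polyhP: Pw => /(_ i); lra.
Qed.

Lemma vertexP w : is_vertex P w <->
  P w /\ forall z, (forall i, active w i -> dotv (arow i) z = 0) -> z = 0.
Proof.
split=> [[Pw [c max_w]] | [Pw ker]].
  split=> // z ker_z; apply: NNPP => /eqP z0.
  have descent y : y != 0 -> (forall i, active w i -> dotv (arow i) y = 0) ->
      dotv c y < 0.
    move=> y0 ker_y; have [|t t0 Pt] := feasible_direction (z := y) Pw.
      by move=> i /ker_y ->.
    have := max_w _ Pt; rewrite dotvDr dotvZr gtrDl pmulr_rlt0 //; apply.
    by rewrite -subr_eq0 addrC addKr scaler_eq0 negb_or gt_eqF.
  have cz_neg := descent _ z0 ker_z.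
  have cz_pos : 0 < dotv c z.
    rewrite -oppr_lt0 -dotvNr; apply: descent; first by rewrite oppr_eq0.
    by move=> i /ker_z; rewrite dotvNr => ->; rewrite oppr0.
  by move: cz_neg; rewrite ltNge ltW.
split=> //; exists (\sum_(i in [set i | active w i]) arow i) => x Px xw.
have w_face : face [set i | active w i] w by split=> // i; rewrite inE => /eqP.
rewrite ((face_sumE _ Pw).2 w_face) lt_neqAle face_sum_le // andbT.
apply: contra xw => /eqP/(face_sumE _ Px)[_ x_face].
rewrite -subr_eq0; apply/eqP/ker => i act_i.
by rewrite dotvBr x_face ?inE // (eqP act_i) subrr.
Qed.

Lemma vertex_active_inj v w : is_vertex P v -> is_vertex P w ->
  [set i | active v i] = [set i | active w i] -> v = w.
Proof.
move=> Vv /vertexP[_ ker] /setP same; apply/eqP; rewrite -subr_eq0; apply/eqP/ker.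
move=> i act_w; have := same i; rewrite !inE act_w => act_v.
by rewrite dotvBr (eqP act_v) (eqP act_w) subrr.
Qed.

Lemma bounded_blocking x r : bounded P -> P x -> r != 0 -> exists i, 0 < dotv (arow i) r.
Proof.
move=> [M bnd] Px r0; apply: NNPP => none; apply/(negP r0)/eqP/matrixP => j l.
rewrite (ord1 l) mxE; apply: NNPP => /eqP rj0.
have ray s : 0 <= s -> P (x + s *: r).
  move=> s0; apply/polyhP => i; rewrite dotvDr dotvZr.
  have ar_le0 : dotv (arow i) r <= 0.
    by rewrite leNgt; apply/negP => pos; apply: none; exists i.
  by have := mulr_ge0_le0 s0 ar_le0; move/polyhP: Px => /(_ i); lra.
have rj_pos : 0 < `|r j 0| by rewrite normr_gt0.
have Mx := bnd _ Px j; have M0 : 0 <= M := le_trans (normr_ge0 _) Mx.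
pose s := (2 * M + 1) / `|r j 0|.
have s0 : 0 <= s by rewrite divr_ge0 ?ltW //; lra.
have := bnd _ (ray s s0) j; rewrite !mxE.
have := lerB_normD (s * r j 0) (x j 0); rewrite normrM ger0_norm // divfK ?gt_eqF //.
by rewrite addrC; lra.
Qed.

Lemma edge_vertexr u v : is_edge P u v -> is_vertex P v.
Proof. by case=> _ []. Qed.

Lemma vertex_active_nonzero w y : is_vertex P w -> y != 0 ->
  exists2 i, active w i & dotv (arow i) y != 0.
Proof.
move=> /vertexP[_ ker] y0; apply: NNPP => none; apply/(negP y0)/eqP/ker => i act_i.
by apply: NNPP => /eqP ay; apply: none; exists i.
Qed.

Definition zero_set w y : {set 'I_k} := [set i | active w i & dotv (arow i) y == 0].

Definition extreme_ray w r : Prop :=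
  forall z, (forall i, i \in zero_set w r -> dotv (arow i) z = 0) -> exists s, z = s *: r.

Lemma extreme_ray_step w c y : is_vertex P w -> tangent w y -> 0 < dotv c y ->
  ~ extreme_ray w y ->
  exists y', [/\ tangent w y', 0 < dotv c y' & zero_set w y \proper zero_set w y'].
Proof.
move=> Vw cone_y cy not_ext.
have [z [ker_z not_mul]] : exists z, (forall i, i \in zero_set w y -> dotv (arow i) z = 0)
    /\ ~ exists s, z = s *: y.
  by apply: NNPP => none; apply: not_ext => z ker_z; apply: NNPP => nm; apply: none; exists z.
pose z1 := dotv c y *: z - dotv c z *: y.
have ker_z1 i : i \in zero_set w y -> dotv (arow i) z1 = 0.
  move=> Zi; move: (Zi); rewrite inE => /andP[_ /eqP ay0].
  by rewrite dotvBr !dotvZr ker_z // ay0 !mulr0 subrr.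
have cz1 : dotv c z1 = 0 by rewrite dotvBr !dotvZr mulrC subrr.
have z1_0 : z1 != 0.
  apply: contra_notN not_mul; rewrite /z1 subr_eq0 => /eqP z_mul.
  exists ((dotv c y)^-1 * dotv c z).
  by rewrite -scalerA -z_mul scalerA mulVf ?gt_eqF ?scale1r.
have [i act_i az1] := vertex_active_nonzero Vw z1_0.
pose z2 := dotv (arow i) z1 *: z1. (* so that [a_i z2 = (a_i z1)^2 > 0] *)
have az2 : 0 < dotv (arow i) z2 by rewrite dotvZr -expr2 exprn_even_gt0.
have [t [i1 [act_i1 pos1 tight1 feas]]] :=
  ratio_test (J := active w) (beta := fun=> 0) cone_y act_i az2.
exists (y + t *: z2); split=> //.
  by rewrite dotvDr dotvZr dotvZr cz1 !mulr0 addr0.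
apply/properP; split.
  apply/subsetP => j Zj; move: (Zj); rewrite !inE => /andP[-> /eqP ay0].
  by rewrite dotvDr !dotvZr (ker_z1 j Zj) ay0 !mulr0 addr0 eqxx.
exists i1; first by rewrite inE act_i1 dotvDr dotvZr tight1 eqxx.
by apply/negP => Zi1; move: pos1; rewrite dotvZr (ker_z1 i1 Zi1) mulr0 ltxx.
Qed.

Lemma exists_extreme_ray w c y : is_vertex P w -> tangent w y -> 0 < dotv c y ->
  exists r, [/\ tangent w r, 0 < dotv c r, zero_set w y \subset zero_set w r
    & extreme_ray w r].
Proof.
move=> Vw; have [N] := ubnP #|~: zero_set w y|; elim: N y => // N IH y.
rewrite ltnS => size_y cone_y cy.
have [ext | not_ext] := classic (extreme_ray w y); first by exists y.
have [y' [cone' cy' proper']] := extreme_ray_step Vw cone_y cy not_ext.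
have [|r [cone_r cr sub' ext]] := IH y' _ cone' cy'.
  by apply: leq_trans size_y; apply: proper_card; rewrite properC.
by exists r; split=> //; apply: subset_trans sub'; apply: proper_sub.
Qed.

Lemma extreme_ray_face w r x : is_vertex P w -> tangent w r -> r != 0 ->
  extreme_ray w r -> face (zero_set w r) x -> exists2 s, 0 <= s & x = w + s *: r.
Proof.
move=> Vw cone_r r0 ext [Px x_face].
have [s xw] : exists s, x - w = s *: r.
  apply: ext => i Zi; move: (Zi); rewrite inE => /andP[/eqP act _].
  by rewrite dotvBr x_face // act subrr.
have x_def : x = w + s *: r by rewrite -xw addrC subrK.
exists s => //; have [i act_i ar0] := vertex_active_nonzero Vw r0.
have ar_neg : dotv (arow i) r < 0 by rewrite lt_neqAle ar0 cone_r.
move/polyhP: Px => /(_ i); rewrite x_def dotvDr dotvZr (eqP act_i).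
by rewrite gerDl; nra.
Qed.

Lemma edge_along_extreme_ray w r : bounded P -> is_vertex P w -> tangent w r ->
  r != 0 -> extreme_ray w r -> exists2 t, 0 < t & is_edge P w (w + t *: r).
Proof.
move=> bnd Vw cone_r r0 ext; have Pw : P w by case: Vw.
have [i0 pos0] := bounded_blocking bnd Pw r0.
have [t [i1 [t0 Pw' pos1 act1]]] := exit_point Pw cone_r pos0.
have w_face : face (zero_set w r) w.
  by split=> // i; rewrite inE => /andP[/eqP act _].
have w'_face : face (zero_set w r) (w + t *: r).
  split=> // i; rewrite inE => /andP[/eqP act /eqP ar].
  by rewrite dotvDr dotvZr ar mulr0 addr0.
have face_val := (face_sumE _ Pw).2 w_face.
exists t => //; split=> //; split.
  apply/vertexP; split=> // z ker_z.
  have [s z_def] : exists s, z = s *: r.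
    by apply: ext => i Zi; apply: ker_z; apply/eqP; apply: w'_face.2.
  move: (ker_z _ act1); rewrite z_def dotvZr => /eqP.
  by rewrite mulf_eq0 (gt_eqF pos1) orbF => /eqP ->; rewrite scale0r.
split.
  by rewrite -subr_eq0 opprD addrA subrr add0r oppr_eq0 scaler_eq0 negb_or gt_eqF.
exists (\sum_(i in zero_set w r) arow i); split.
  by rewrite face_val ((face_sumE _ Pw').2 w'_face).
split=> [x Px | x Px]; rewrite face_val; first exact: face_sum_le.
move=> /(face_sumE _ Px) x_face.
have [s s0 x_def] := extreme_ray_face Vw cone_r r0 ext x_face.
have s_le_t : s <= t.
  move/polyhP: Px => /(_ i1); move: act1; rewrite /active x_def !dotvDr !dotvZr => /eqP.
  move=> tight1 le1; have : s * dotv (arow i1) r <= t * dotv (arow i1) r by lra.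
  by rewrite ler_pM2r.
exists (s / t); split; first by rewrite divr_ge0 // ltW.
split; first by rewrite ler_pdivrMr // mul1r.
by rewrite x_def scalerDr scalerA divfK ?gt_eqF // scalerBl scale1r addrA subrK.
Qed.

Lemma improving_edge S c w x : bounded P -> is_vertex P w -> face S w -> face S x ->
  dotv c w < dotv c x -> exists w', [/\ is_edge P w w', face S w' & dotv c w < dotv c w'].
Proof.
move=> bnd Vw [Pw w_face] [Px x_face] cwx.
have cone_y : tangent w (x - w).
  by move=> i /eqP act; rewrite dotvBr act subr_le0; move/polyhP: Px.
have cy : 0 < dotv c (x - w) by rewrite dotvBr subr_gt0.
have [r [cone_r cr sub ext]] := exists_extreme_ray Vw cone_y cy.
have r0 : r != 0 by apply: contraTneq cr => ->; rewrite dotv0r ltxx.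
have [t t0 edge] := edge_along_extreme_ray bnd Vw cone_r r0 ext.
exists (w + t *: r); split=> //; last by rewrite dotvDr dotvZr ltrDl pmulr_rgt0.
split; first by case: (edge_vertexr edge).
move=> i Si; have : i \in zero_set w (x - w).
  by rewrite inE /active dotvBr w_face // x_face // subrr !eqxx.
move=> /(subsetP sub); rewrite inE => /andP[/eqP act /eqP ar].
by rewrite dotvDr dotvZr ar mulr0 addr0.
Qed.

Definition face_argmax c S u : Prop :=
  face S u /\ forall x, face S x -> dotv c x <= dotv c u.

Lemma argmax_or_better c S v : face S v ->
  face_argmax c S v \/ exists2 x, face S x & dotv c v < dotv c x.
Proof.
move=> v_face; have [better | no_better] := classic (exists2 x, face S x & dotv c v < dotv c x).
  by right.
left; split=> // x x_face; rewrite leNgt; apply/negP => cx.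
by apply: no_better; exists x.
Qed.

Lemma exists_min_vertex (Q : 'cV[R]_n -> Prop) (f : 'cV[R]_n -> R) :
  (forall x, Q x -> is_vertex P x) -> (exists x, Q x) ->
  exists2 x0, Q x0 & forall x, Q x -> f x0 <= f x.
Proof.
move=> QV; apply: (exists_min_of_inj (g := fun x => [set i | active x i])) => x y Qx Qy.
exact: vertex_active_inj (QV _ Qx) (QV _ Qy).
Qed.

Lemma shadow_pivot S psi g w : bounded P -> is_vertex P w -> face_argmax psi S w ->
  (exists2 x, face S x & dotv g w < dotv g x) ->
  exists w1 t, [/\ is_edge P w w1, face S w1, dotv g w < dotv g w1, 0 <= t &
    face_argmax (psi + t *: g) S w /\ dotv (psi + t *: g) w1 = dotv (psi + t *: g) w].
Proof.
move=> bnd Vw [w_face max_w] [x x_face gx].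
pose Q w1 := [/\ is_edge P w w1, face S w1 & dotv g w < dotv g w1].
(* The neighbour of least slope is the first to tie with [w] as [t] grows. *)
pose slope w1 := (dotv psi w - dotv psi w1) / (dotv g w1 - dotv g w).
have [w1 [edge1 face1 g1] min1] : exists2 w1, Q w1 & forall w2, Q w2 -> slope w1 <= slope w2.
  apply: exists_min_vertex => [w2 [/edge_vertexr] // | ].
  exact: improving_edge bnd Vw w_face x_face gx.
have dg1 : 0 < dotv g w1 - dotv g w by rewrite subr_gt0.
set t := slope w1 in min1.
have t0 : 0 <= t by rewrite divr_ge0 ?subr_ge0 ?max_w // ltW.
have tie : dotv psi w1 + t * dotv g w1 = dotv psi w + t * dotv g w.
  have : t * (dotv g w1 - dotv g w) = dotv psi w - dotv psi w1 by rewrite divfK ?gt_eqF.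
  lra.
exists w1, t; split=> //; split; last by rewrite !dotvDl !dotvZl.
split=> // y y_face; rewrite leNgt; apply/negP => better.
have [w2 [edge2 face2]] := improving_edge bnd Vw w_face y_face better.
rewrite !dotvDl !dotvZl => up2; have psi2 := max_w _ face2.
have [g2 | g2] := ltP (dotv g w) (dotv g w2).
  have := min1 w2 (And3 edge2 face2 g2); rewrite ler_pdivlMr ?subr_gt0 //.
  lra.
by have := ler_wpM2l t0 g2; lra.
Qed.

Lemma shadow_step S a c w beta : bounded P -> is_vertex P w -> 0 <= beta ->
  face_argmax (a + beta *: c) S w ->
  (0 < beta \/ forall x, face S x -> dotv a x = dotv a w -> dotv c x <= dotv c w) ->
  (exists2 x, face S x & dotv c w < dotv c x) ->
  exists w' beta', [/\ is_edge P w w', dotv c w < dotv c w', dotv a w' < dotv a w,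
    0 < beta' & face_argmax (a + beta' *: c) S w'].
Proof.
move=> bnd Vw beta0 max_w tiebreak better.
have [w1 [t [edge1 face1 c1 t0 [[_ max_t] tie]]]] := shadow_pivot bnd Vw max_w better.
have sum_beta : a + beta *: c + t *: c = a + (beta + t) *: c by rewrite scalerDl addrA.
rewrite sum_beta in max_t tie.
have beta'0 : 0 < beta + t.
  rewrite lt_neqAle addr_ge0 // andbT; apply/negP => /eqP beta'_0.
  have [beta_0 t_0] : beta = 0 /\ t = 0 by split; lra.
  case: tiebreak => [|no_tie]; first by rewrite beta_0 ltxx.
  move: tie; rewrite -beta'_0 scale0r addr0 => /(no_tie _ face1).
  by rewrite leNgt c1.
exists w1, (beta + t); split=> //.
  move: tie; rewrite !dotvDl !dotvZl => tie.
  have : 0 < (beta + t) * (dotv c w1 - dotv c w) by rewrite mulr_gt0 // subr_gt0.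
  lra.
by split=> // x /max_t; rewrite tie.
Qed.

Definition max_path c S v p : Prop :=
  Defs.mono_path P c v p /\ face_argmax c S (last v p).

Lemma shadow_path S a c (s : seq R) w beta : bounded P ->
  (forall x, is_vertex P x -> dotv a x \in s) ->
  is_vertex P w -> 0 <= beta -> face_argmax (a + beta *: c) S w ->
  (0 < beta \/ forall x, face S x -> dotv a x = dotv a w -> dotv c x <= dotv c w) ->
  exists2 p, max_path c S w p & (size p <= count (< dotv a w) s)%N.
Proof.
move=> bnd levels; have [N] := ubnP (count (< dotv a w) s).
elim: N w beta => // N IH w beta; rewrite ltnS => cnt Vw beta0 max_w tiebreak.
have [opt | better] := argmax_or_better c max_w.1; first by exists [::].
have [w' [beta' [edge c' a' beta'0 max']]] := shadow_step bnd Vw beta0 max_w tiebreak better.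
have Vw' := edge_vertexr edge.
have drop := count_lt_mem a' (levels _ Vw').
have [|p [path_p max_p] size_p] := IH w' beta' _ Vw' (ltW beta'0) max' (or_introl beta'0).
  exact: leq_trans drop cnt.
by exists (w' :: p); [split | apply: leq_ltn_trans size_p drop].
Qed.

Lemma generic_argmax_unique c u v : bounded P -> generic P c ->
  is_vertex P u -> is_vertex P v ->
  (forall x, P x -> dotv c x <= dotv c u) -> (forall x, P x -> dotv c x <= dotv c v) ->
  u = v.
Proof.
move=> bnd gen Vu Vv max_u max_v; apply: NNPP => /eqP uv.
have [Pv [g max_g]] := Vv; have Pu : P u by case: Vu.
have gu : dotv g u < dotv g v by apply: max_g.
have max_u0 : face_argmax c set0 u.
  by split=> [|x /face0]; [apply/face0 | apply: max_u].
have [|w1 [t [edge1 _ _ t0 [[_ max_t] tie]]]] := shadow_pivot (g := g) bnd Vu max_u0.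
  by exists v => //; apply/face0.
have t_0 : t = 0.
  move: (max_t v (proj2 (face0 v) Pv)); rewrite !dotvDl !dotvZl.
  have := max_v _ Pu; have := max_u _ Pv => cvu cuv tv.
  have : t * (dotv g v - dotv g u) <= 0 by lra.
  by rewrite pmulr_lle0 ?subr_gt0 // => t_le0; apply/eqP; rewrite eq_le t_le0.
by move: tie (gen _ _ edge1); rewrite t_0 scale0r addr0 => ->; rewrite eqxx.
Qed.

Definition face_dim_le S j : Prop :=
  ~ exists p : 'I_j.+2 -> 'cV[R]_n, (forall l, face S (p l)) /\ aff_indep p.

Lemma face_setU1 S i x : face (i |: S) x <-> face S x /\ dotv (arow i) x = brow i.
Proof.
split=> [[Px x_face] | [[Px x_face] ax]]; last first.
  by split=> // j; rewrite !inE => /orP[/eqP -> | /x_face].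
split; last by apply: x_face; rewrite !inE eqxx.
by split=> // j Sj; apply: x_face; rewrite !inE Sj orbT.
Qed.

Lemma face_dim_le_setU1 S i j x : face_dim_le S j.+1 -> face S x ->
  dotv (arow i) x != brow i -> face_dim_le (i |: S) j.
Proof.
move=> dim x_face ax [p [p_face p_free]]; apply: dim.
have p_facet l := (face_setU1 _ _ _).1 (p_face l).
exists (insert1 p x); split.
  by move=> l; rewrite /insert1; case: unlift => [l'|] //; apply: (p_facet l').1.
apply: (aff_indep_insert1 (a := arow i)) => // [l |]; rewrite (p_facet ord0).2 //.
by rewrite (p_facet l).2.
Qed.

Lemma vertex_leaving_facet v x : is_vertex P v -> P x -> x != v ->
  exists2 i, active v i & dotv (arow i) x < brow i.
Proof.
move=> Vv Px xv; have [|i act_i ax] := vertex_active_nonzero (y := x - v) Vv.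
  by rewrite subr_eq0.
exists i => //; rewrite lt_neqAle; move/polyhP: Px => ->; rewrite andbT.
by apply: contra ax; rewrite dotvBr (eqP act_i) => /eqP ->; rewrite subrr.
Qed.

Lemma face_dim0_argmax c S v : face_dim_le S 0 -> face S v -> face_argmax c S v.
Proof.
move=> dim v_face; split=> // x x_face; have [-> // | xv] := eqVneq x v.
case: dim; exists (fun l : 'I_2 => [:: v; x]`_l); split; last exact: aff_indep2.
by case=> [[|[|l]] //= _].
Qed.

Lemma face_dim1_path c S v : bounded P -> face_dim_le S 1 -> is_vertex P v -> face S v ->
  exists2 p, max_path c S v p & (size p <= 1)%N.
Proof.
move=> bnd dim Vv v_face.
have [opt | [x x_face cx]] := argmax_or_better c v_face; first by exists [::].
have [w [edge w_face cw]] := improving_edge bnd Vv v_face x_face cx.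
have Vw := edge_vertexr edge.
exists [:: w] => //; split; first by split=> //=; split.
split=> // y y_face; rewrite leNgt; apply/negP => cy.
have wv : w != v by apply: contraTneq cw => ->; rewrite ltxx.
have [s ys] : exists s, y - v = s *: (w - v).
  apply: NNPP => not_collinear; apply: dim; exists (fun l : 'I_3 => [:: v; w; y]`_l).
  by split; [case=> [[|[|[|l]]] //= _] | exact: aff_indep3].
have y_def : y = v + s *: (w - v) by rewrite -ys addrC subrK.
rewrite y_def in y_face cy.
have s_le1 : 0 <= 1 - s by rewrite subr_ge0; apply: vertex_line_le1 Vw v_face.1 y_face.1 wv.
have dc : 0 <= dotv c w - dotv c v by rewrite subr_ge0 ltW.
have := mulr_ge0 s_le1 dc.
by move: cy; rewrite dotvDr dotvZr dotvBr; lra.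
Qed.

Lemma facet_argmax_path c m S i u : bounded P -> is_level A b m -> is_vertex P u ->
  face_argmax c (i |: S) u -> exists2 p, max_path c S u p & (size p <= m)%N.
Proof.
move=> bnd lvl Vu [/face_setU1[u_face au] max_u].
have [s [size_s levels]] := lvl i.
have max_a : face_argmax (arow i + 0 *: c) S u.
  by split=> // x [Px _]; rewrite scale0r addr0 au; move/polyhP: Px.
have tiebreak x : face S x -> dotv (arow i) x = dotv (arow i) u -> dotv c x <= dotv c u.
  by move=> x_face ax; apply: max_u; apply/face_setU1; rewrite ax au.
have [p max_p size_p] := shadow_path bnd levels Vu (lexx 0) max_a (or_intror tiebreak).
exists p => //; apply: leq_trans size_p _; rewrite -ltnS.
exact: leq_trans (count_lt_size (levels _ Vu)) size_s.
Qed.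

Lemma face_max_path c m j S v : bounded P -> is_level A b m -> face_dim_le S j ->
  is_vertex P v -> face S v -> exists2 p, max_path c S v p & (size p <= (j - 1) * m + 1)%N.
Proof.
move=> bnd lvl; elim: j S v => [|[|j] IH] S v dim Vv v_face.
- by exists [::] => //; split=> //; apply: face_dim0_argmax.
- exact: face_dim1_path.
have [opt | [x x_face cx]] := argmax_or_better c v_face; first by exists [::].
have xv : x != v by apply: contraTneq cx => ->; rewrite ltxx.
have [i act_i ax] := vertex_leaving_facet Vv x_face.1 xv.
have v_facet : face (i |: S) v by apply/face_setU1; split=> //; apply/eqP.
have [p1 [path1 max1] size1] :=
  IH _ _ (face_dim_le_setU1 dim x_face (negbT (lt_eqF ax))) Vv v_facet.
have [p2 [path2 max2] size2] := facet_argmax_path bnd lvl (mono_path_last path1) max1.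
exists (p1 ++ p2); first by split; [exact: mono_path_cat | rewrite last_cat].
by rewrite size_cat; move: size1 size2; rewrite !subSS !subn0 mulSn; lia.
Qed.

End Polyhedron.

Unset Implicit Arguments.

Theorem mainTheorem3 (R : realFieldType) (n k d m : nat)
    (A : 'M[R]_(k, n)) (b : 'cV[R]_k) :
  irredundant A b ->
  bounded (polyh A b) ->
  has_dim (polyh A b) d ->
  is_level A b m ->
  monotone_diam_le (polyh A b) ((d - 1) * m + 1)%N.
Proof.
move=> _ bnd [_ dim] lvl c gen v vmax Vv Vmax max_vmax.
have dim0 : face_dim_le A b set0 d.
  by move=> [p [p_face p_free]]; apply: dim; exists p; split=> // l; apply/face0.
have v_face : face A b set0 v by apply/face0; case: Vv.
have [p [path_p [_ max_last]] size_p] := face_max_path c bnd lvl dim0 Vv v_face.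
exists p; split=> //; split=> //.
apply: generic_argmax_unique bnd gen (mono_path_last path_p) Vmax _ max_vmax.
by move=> x Px; apply: max_last; apply/face0.
Qed.
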